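(* For every odd positive integer $n$ and every $D > 1$, there is an instance of colorful $k$-center with $8n$ points, $k=n$, and $r=b=2n$, such that every solution has radius at least $D$, yet the polytope of LP1 with unit radius for this instance is not recognized as infeasible by $\Omega(n)$ rounds of the Sum-of-Squares hierarchy: there is a constant $c>0$ (independent of $n$ and $D$) such that for every $t \le cn$ the $t$-th SoS lifted polytope $SoS^t(K)$ of the LP1 polytope $K$ is nonempty. Consequently the integrality gap of LP1 with $8n$ points persists (is unbounded) up to $\Omega(n)$ rounds of Sum-of-Squares.
   Context: An instance of colorful $k$-center consists of a finite set $P$ of points with a metric $d$, a partition $P=R\cup B$ into red and blue points, and integers $k,r,b\ge0$; with $\mathcal{B}(j,\rho)=\{p\in P:d(j,p)\le\rho\}$, a solution of radius $\rho$ is $C\subseteq P$, $|C|\le k$, with $\bigcup_{c\in C}\mathcal{B}(c,\rho)$ containing at least $r$ red and $b$ blue points. LP1 (unit radius, $\mathcal{B}(j)=\mathcal{B}(j,1)$) is the polytope $K$ of vectors $(x,z)\in[0,1]^{P}\times[0,1]^P$ with $\sum_{i\in\mathcal{B}(j)}x_i\ge z_j$ for all $j\in P$, $\sum_{i\in P}x_i\le k$, $\sum_{j\in R}z_j\ge r$, $\sum_{j\in B}z_j\ge b$. Sum-of-Squares: let $V$ be the variable set, $K=\{v\in[0,1]^V: g_\ell(v)\ge0,\ \ell=1,\dots,m\}$ with linear $g_\ell$. $\mathcal{P}_t(V)$ denotes subsets of $V$ of size at most $t$. For $y\in\mathbb{R}^{\mathcal{P}(V)}$ and $g(v)=\sum_{I\subseteq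 V} a_I\prod_{i\in I}v_i$, $(g*y)_I=\sum_{J\subseteq V}a_J y_{I\cup J}$. For a collection $\mathcal{T}$ of subsets, $M_{\mathcal{T}}(y)$ is the matrix indexed by $\mathcal{T}$ with $(M_{\mathcal{T}}(y))_{I,J}=y_{I\cup J}$. The $t$-th SoS lifted polytope $SoS^t(K)$ is the set of $y\in[0,1]^{\mathcal{P}_{2t}(V)}$ with $y_\emptyset=1$, $M_{\mathcal{P}_t(V)}(y)\succeq0$, and $M_{\mathcal{P}_{t-1}(V)}(g_\ell*y)\succeq0$ for all $\ell$. *)

From Stdlib Require List.
From HB Require Import structures.
From mathcomp Require Import all_boot all_order all_algebra.
From mathcomp Require Import reals.
Set Implicit Arguments. Unset Strict Implicit. Unset Printing Implicit Defensive.
Import Order.TTheory GRing.Theory Num.Theory.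
Local Open Scope ring_scope.

Section ColorfulKCenter.
Variable R : realType.
Variable T : finType.

Definition is_metric (d : T -> T -> R) : Prop :=
  [/\ forall x y, 0 <= d x y,
      forall x y, d x y = 0 <-> x = y,
      forall x y, d x y = d y x &
      forall x y z, d x z <= d x y + d y z].

Definition ball (d : T -> T -> R) (j : T) (rho : R) : {set T} :=
  [set p | d j p <= rho].

Definition covered (d : T -> T -> R) (C : {set T}) (rho : R) : {set T} :=
  \bigcup_(c in C) ball d c rho.

Definition is_solution (d : T -> T -> R) (Red : {set T}) (k r b : nat)
    (C : {set T}) (rho : R) : Prop :=
  [/\ (#|C| <= k)%N,
      (r <= #|covered d C rho :&: Red|)%N &
      (b <= #|covered d C rho :&: ~: Red|)%N].

(* LP1 variables: inl i = x_i, inr j = z_j *)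
Definition LPvar := (T + T)%type.

(* a linear polynomial g(v) = a0 + sum_v a_v v *)
Definition linform := (R * (LPvar -> R))%type.

Definition lin_shift (g : linform) (y : {set LPvar} -> R) : {set LPvar} -> R :=
  fun I => g.1 * y I + \sum_(v : LPvar) g.2 v * y (v |: I).

(* the constraints g_l >= 0 of LP1 with unit radius (box constraints [0,1]
   are handled separately, as in the definition of K) *)
Definition LP1_constraints (d : T -> T -> R) (Red : {set T}) (k r b : nat)
    : seq linform :=
  [seq (0, fun v : LPvar => match v with
                          | inl i => if d j i <= 1 then 1 else 0
                          | inr j' => if j' == j then -1 else 0
                          end) | j <- enum T]
  ++ [:: (k%:R, fun v : LPvar => match v with inl _ => -1 | inr _ => 0 end);
         (- r%:R, fun v : LPvar => match v with
                                  | inl _ => 0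
                                  | inr j => if j \in Red then 1 else 0 end);
         (- b%:R, fun v : LPvar => match v with
                                  | inl _ => 0
                                  | inr j => if j \in Red then 0 else 1 end)].

Definition psd_on (S : pred {set LPvar}) (M : {set LPvar} -> {set LPvar} -> R)
    : Prop :=
  forall w : {set LPvar} -> R,
    0 <= \sum_(I | S I) \sum_(J | S J) w I * M I J * w J.

(* y in SoS^t(K), K given by the linear constraints gs and the box;
   y is a function on all subsets, only the entries of size <= 2t matter *)
Definition in_SoS (t : nat) (gs : seq linform) (y : {set LPvar} -> R) : Prop :=
  [/\ y set0 = 1,
      forall I : {set LPvar}, (#|I| <= 2 * t)%N -> 0 <= y I <= 1,
      psd_on (fun I => (#|I| <= t)%N) (fun I J => y (I :|: J)) &
      forall g, Stdlib.Lists.List.In g gs ->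
        psd_on (fun I => (#|I| <= t.-1)%N) (fun I J => lin_shift g y (I :|: J))].

Definition SoS_nonempty (t : nat) (gs : seq linform) : Prop :=
  exists y, in_SoS t gs y.

End ColorfulKCenter.

From HB Require Import structures.
From mathcomp Require Import all_boot all_order all_algebra.
From mathcomp Require Import reals.
From mathcomp Require Import ring lra zify.
Set Implicit Arguments. Unset Strict Implicit. Unset Printing Implicit Defensive.
Import Order.TTheory GRing.Theory Num.Theory.
Local Open Scope ring_scope.

(* The instance has 2n clusters of four points, at distance 1 inside a cluster
   and D across clusters; cluster (i, false) has three red points and one blue
   one, cluster (i, true) the opposite.  A solution of radius < D only covers the
   clusters of its at most n centers, and reaching 2n points of each color
   would need n/2 clusters of each kind: impossible for n odd.

   For SoS, open cluster (i, false) when x_i = 1 and (i, true) otherwise, for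
   x in {0,1}^n.  Every constraint of LP1 then becomes a multiple of the
   knapsack constraint sum_i x_i - n/2, which has no 0/1 solution.  Grigoriev's
   pseudo-expectation for this constraint vanishes on its multiples of degree
   < n and is nonnegative on squares of degree-d polynomials for 4d <= n + 1:
   modulo the knapsack constraint every such polynomial can be made homogeneous
   of degree d, and for homogeneous polynomials the pseudo-moment matrix has an
   explicit Gram decomposition.  Pulling it back along the cluster assignment
   gives a point of SoS^t(K) whenever 8t <= n + 1. *)

Lemma natr_card (R : pzSemiRingType) (T : finType) (A : {set T}) :
  #|A|%:R = \sum_t ((t \in A)%:R : R).
Proof. by rewrite -sum1_card natr_sum big_mkcond; apply: eq_bigr => t _; case: (t \in A). Qed.

Lemma cardsU_disjoint (T : finType) (A B : {set T}) :
  [disjoint A & B] -> #|A :|: B| = (#|A| + #|B|)%N.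
Proof. by move=> dAB; apply/eqP; rewrite (leq_card_setU A B).2. Qed.

Lemma big_pair (V : Type) (idx : V) (op : Monoid.com_law idx) (I J : finType)
    (F : I * J -> V) :
  \big[op/idx]_(p : I * J) F p = \big[op/idx]_i \big[op/idx]_j F (i, j).
Proof. by rewrite pair_bigA; apply: eq_bigr => -[]. Qed.

Lemma sum_draws (R : pzSemiRingType) (T : finType) (C : {set T}) j :
  \sum_(U : {set T}) (((#|U| == j) && (U \subset C))%:R : R) = 'C(#|C|, j)%:R.
Proof.
by rewrite -cards_draws natr_card; apply: eq_bigr => U _; rewrite inE andbC.
Qed.

Section PseudoExpectation.
Variable R : realFieldType.
Variable m : nat.
Implicit Types (a b k : nat) (z : R) (A B U x : {set 'I_m}) (f g : {set 'I_m} -> R).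

Definition half : R := m%:R / 2.

Definition falling z k : R := \prod_(i < k) (z - i%:R).

(* Grigoriev's pseudo-distribution for the knapsack equation [sum_i x_i = m/2]:
   [pmass a b] is the pseudo-probability that a prescribed coordinates are 1
   and b other prescribed coordinates are 0. *)
Definition pmass a b : R := falling half a * falling half b / falling m%:R (a + b).

Definition pexp f : R := \sum_(x : {set 'I_m}) pmass #|x| (m - #|x|) * f x.

Definition monomial U x : R := (U \subset x)%:R.

Lemma falling0 z : falling z 0 = 1.
Proof. by rewrite /falling big_ord0. Qed.

Lemma fallingS z k : falling z k.+1 = falling z k * (z - k%:R).
Proof. by rewrite /falling big_ord_recr. Qed.

Lemma falling_gt0 z k : k%:R < z + 1 -> 0 < falling z k.
Proof.
elim: k => [|k IHk] hk; first by rewrite falling0.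
have kz : k%:R < z by rewrite -(ltrD2r 1) (le_lt_trans _ hk) // -natr1.
by rewrite fallingS mulr_gt0 ?subr_gt0 ?IHk // (lt_trans kz) // ltrDl.
Qed.

Lemma falling_m_gt0 k : (k <= m)%N -> 0 < falling m%:R k.
Proof. by move=> km; rewrite falling_gt0 // natr1 ltr_nat ltnS. Qed.

Lemma falling_half_gt0 k : (2 * k <= m.+1)%N -> 0 < falling half k.
Proof.
move=> km; apply: falling_gt0.
have : (2 * k)%:R <= (m + 1)%:R :> R by rewrite ler_nat addn1.
by rewrite /half natrM natrD; lra.
Qed.

Lemma pmass00 : pmass 0 0 = 1.
Proof. by rewrite /pmass !falling0 mulr1 divr1. Qed.

Lemma pmass_ge0 a b :
  (2 * a <= m.+1)%N -> (2 * b <= m.+1)%N -> (a + b <= m)%N -> 0 <= pmass a b.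
Proof.
move=> ha hb hab.
by rewrite ltW // divr_gt0 ?mulr_gt0 ?falling_half_gt0 ?falling_m_gt0.
Qed.

Lemma pmassD a b : (a + b < m)%N -> pmass a b = pmass a.+1 b + pmass a b.+1.
Proof.
move=> hab; rewrite /pmass addSn addnS !fallingS.
have f_neq0 : falling m%:R (a + b) != 0 by rewrite gt_eqF // falling_m_gt0 // ltnW.
have m_ab : m%:R - (a + b)%:R != 0 :> R by rewrite subr_eq0 eqr_nat neq_ltn hab orbT.
rewrite natrD in m_ab *; rewrite /half; field.
by rewrite f_neq0 m_ab.
Qed.

Lemma pmassS0 k : (k < m)%N -> (m - k)%:R * pmass k.+1 0 = (half - k%:R) * pmass k 0.
Proof.
move=> km; rewrite /pmass !addn0 !fallingS falling0 !mulr1.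
have f_neq0 : falling m%:R k != 0 by rewrite gt_eqF // falling_m_gt0 // ltnW.
have m_k : m%:R - k%:R != 0 :> R by rewrite subr_eq0 eqr_nat neq_ltn km orbT.
by rewrite natrB ?(ltnW km) //; field; rewrite f_neq0 m_k.
Qed.

Lemma pmass_binomial i a b : (a + b + i <= m)%N ->
  \sum_(j < i.+1) 'C(i, j)%:R * pmass (a + (i - j)) (b + j) = pmass a b.
Proof.
elim: i a b => [|i IHi] a b hab.
  by rewrite big_ord_recl big_ord0 bin0 addr0 mul1r !addn0.
rewrite big_ord_recl bin0 mul1r subn0.
under eq_bigr do rewrite lift0 binS natrD mulrDl subSS.
rewrite big_split /=.
have -> : \sum_(j < i.+1) 'C(i, j)%:R * pmass (a + (i - j)) (b + j.+1) = pmass a b.+1.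
  by rewrite -(IHi a b.+1); [apply: eq_bigr => j _; rewrite addnS | lia].
have IHa := IHi a.+1 b; rewrite big_ord_recl bin0 mul1r subn0 addn0 in IHa.
rewrite big_ord_recr /= bin_small // mul0r addr0.
rewrite (eq_bigr (fun j : 'I_i => 'C(i, lift ord0 j)%:R *
                   pmass (a.+1 + (i - lift ord0 j)) (b + lift ord0 j))); last first.
  by move=> j _; rewrite lift0 /=; congr (_ * pmass _ _); have := ltn_ord j; lia.
by rewrite addrA addn0 addnS -addSn IHa -?pmassD //; lia.
Qed.

Lemma eq_pexp f g : f =1 g -> pexp f = pexp g.
Proof. by move=> fg; apply: eq_bigr => x _; rewrite fg. Qed.

Lemma pexpD f g : pexp (fun x => f x + g x) = pexp f + pexp g.
Proof. by rewrite /pexp -big_split; apply: eq_bigr => x _; rewrite mulrDr. Qed.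

Lemma pexpZ c f : pexp (fun x => c * f x) = c * pexp f.
Proof. by rewrite /pexp mulr_sumr; apply: eq_bigr => x _; rewrite mulrCA. Qed.

Lemma pexp_sum (I : finType) (P : pred I) (F : I -> {set 'I_m} -> R) :
  pexp (fun x => \sum_(i | P i) F i x) = \sum_(i | P i) pexp (F i).
Proof. by rewrite /pexp exchange_big; apply: eq_bigr => x _; rewrite mulr_sumr. Qed.

Lemma pexp_sq_sum (I : finType) (P : pred I) (w : I -> R) (F : I -> {set 'I_m} -> R) :
  pexp (fun x => (\sum_(i | P i) w i * F i x) ^+ 2) =
  \sum_(i | P i) \sum_(j | P j) w i * pexp (fun x => F i x * F j x) * w j.
Proof.
rewrite (eq_pexp (g := fun x => \sum_(i | P i) \sum_(j | P j) (w i * w j) * (F i x * F j x))).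
  rewrite pexp_sum; apply: eq_bigr => i _; rewrite pexp_sum; apply: eq_bigr => j _.
  by rewrite pexpZ mulrAC.
move=> x; rewrite expr2 mulr_suml; apply: eq_bigr => i _.
by rewrite mulr_sumr; apply: eq_bigr => j _; rewrite mulrACA.
Qed.

Lemma pexp_point A :
  pexp (fun x => (A \subset x)%:R * (~: A \subset ~: x)%:R) = pmass #|A| #|~: A|.
Proof.
rewrite /pexp (bigD1 A) //= !subxx /= mulr1 big1 ?addr0 => [|x /negPf xA].
  by rewrite mulr1 (cardsCs A) card_ord subKn // -[X in (_ <= X)%N](card_ord m) max_card.
by rewrite setCS -natrM mulnb -eqEsubset eq_sym xA mulr0.
Qed.

Lemma pexp_pattern A B : [disjoint A & B] ->
  pexp (fun x => (A \subset x)%:R * (B \subset ~: x)%:R) = pmass #|A| #|B|.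
Proof.
move free_k : (m - #|A :|: B|)%N => k; elim: k A B free_k => [|k IHk] A B free_k dAB.
  have ABT : A :|: B = setT by apply/eqP; rewrite eqEcard subsetT cardsT card_ord; lia.
  suff -> : B = ~: A by exact: pexp_point.
  apply/setP=> i; rewrite inE; apply/idP/idP => [iB|iA]; first by rewrite (disjointFl dAB iB).
  by have := in_setT i; rewrite -ABT inE (negPf iA).
have [i] : exists i, i \in ~: (A :|: B).
  by apply/set0Pn; rewrite -card_gt0; have := cardsC (A :|: B); rewrite card_ord; lia.
rewrite !inE negb_or => /andP[iA iB].
rewrite (eq_pexp (g := fun x => ((i |: A) \subset x)%:R * (B \subset ~: x)%:R +
                                (A \subset x)%:R * ((i |: B) \subset ~: x)%:R)); last first.
  move=> x; rewrite !subUset !sub1set inE.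
  by case: (i \in x); case: (A \subset x); case: (B \subset ~: x);
    rewrite /= ?mulr0 ?mul0r ?addr0 ?add0r.
rewrite pexpD !IHk ?cardsU1 ?iA ?iB -?pmassD //.
- by rewrite -(cardsU_disjoint dAB); lia.
- by rewrite setUCA cardsU1 inE negb_or iA iB in free_k *; lia.
- by rewrite disjoint_sym disjoints_subset subUset sub1set inE iA -disjoints_subset disjoint_sym.
- by rewrite -setUA cardsU1 inE negb_or iA iB in free_k *; lia.
- by rewrite disjoints_subset subUset sub1set inE iB -disjoints_subset.
Qed.

Lemma pexp_monomial U : pexp (monomial U) = pmass #|U| 0.
Proof.
have := @pexp_pattern U set0; rewrite cards0 => <-; last by rewrite disjoints_subset setC0 subsetT.
by apply: eq_pexp => x; rewrite sub0set mulr1.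
Qed.

Lemma pexp1 : pexp (fun=> 1) = 1.
Proof.
rewrite (eq_pexp (g := monomial set0)) ?pexp_monomial ?cards0 ?pmass00 // => x.
by rewrite /monomial sub0set.
Qed.

Lemma sum_monomial_notin U x :
  \sum_(i | i \notin U) monomial (i |: U) x = (#|x|%:R - #|U|%:R) * monomial U x.
Proof.
rewrite /monomial; case Ux: (U \subset x); last first.
  by rewrite mulr0 big1 // => i _; rewrite subUset Ux andbF.
rewrite mulr1 (eq_bigr (fun i => (i \in x)%:R)) => [|i _]; last first.
  by rewrite subUset sub1set Ux andbT.
rewrite natr_card [in RHS](bigID (mem U)) /=.
rewrite [X in _ = X + _ - _](eq_bigr (fun=> 1)) => [|i iU]; last by rewrite (subsetP Ux i iU).
by rewrite sumr_const (eq_card (B := U)) // addrAC subrr add0r.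
Qed.

Lemma pexp_knapsack_monomial U : (#|U| < m)%N ->
  pexp (fun x => (#|x|%:R - half) * monomial U x) = 0.
Proof.
move=> Um; rewrite (eq_pexp (g := fun x =>
  \sum_(i | i \notin U) monomial (i |: U) x + (#|U|%:R - half) * monomial U x)); last first.
  by move=> x; rewrite sum_monomial_notin -mulrDl addrA subrK.
rewrite pexpD pexpZ pexp_sum pexp_monomial.
rewrite (eq_bigr (fun=> pmass #|U|.+1 0)) => [|i iU]; last by rewrite pexp_monomial cardsU1 iU.
rewrite sumr_const.
have -> : #|(fun i => i \notin U)| = #|~: U| by apply: eq_card => i; rewrite inE.
rewrite (cardsCs (~: U)) setCK card_ord -[_ *+ _]mulr_natl pmassS0 //.
by rewrite -mulrDl addrA subrK subrr mul0r.
Qed.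

End PseudoExpectation.

Section MultilinearPolynomials.
Variable R : realFieldType.
Variable m : nat.
Implicit Types (lo hi d : nat) (U x : {set 'I_m}) (f g : {set 'I_m} -> R).
Local Notation monomial := (@monomial R m).
Local Notation pexp := (@pexp R m).
Local Notation half := (half R m).

(* Functions on the cube are multilinear polynomials in the monomials
   [U \subset x]; [mlpoly lo hi f] bounds the degrees of the monomials of f. *)
Definition mlpoly lo hi f := exists2 p : {set 'I_m} -> R,
  forall U, p U != 0 -> (lo <= #|U| <= hi)%N & f =1 fun x => \sum_U p U * monomial U x.

Lemma eq_mlpoly lo hi f g : mlpoly lo hi f -> f =1 g -> mlpoly lo hi g.
Proof. by move=> [p hp ep] fg; exists p => // x; rewrite -fg. Qed.

Lemma mlpoly0 lo hi : mlpoly lo hi (fun=> 0).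
Proof. by exists (fun=> 0) => [U|x]; rewrite ?eqxx // big1 // => U _; rewrite mul0r. Qed.

Lemma mlpoly_monomial lo hi U : (lo <= #|U| <= hi)%N -> mlpoly lo hi (monomial U).
Proof.
move=> hU; exists (fun V => (V == U)%:R) => [V /=|x].
  by case: (eqVneq V U) => [->|] //=; rewrite eqxx.
by rewrite (bigD1 U) //= eqxx mul1r big1 ?addr0 // => V /negPf ->; rewrite mul0r.
Qed.

Lemma mlpoly1 hi : mlpoly 0 hi (fun=> 1).
Proof.
have hm : mlpoly 0 hi (monomial set0) by apply: mlpoly_monomial; rewrite cards0.
by apply: (eq_mlpoly hm) => x; rewrite /monomial sub0set.
Qed.

Lemma mlpolyD lo hi f g :
  mlpoly lo hi f -> mlpoly lo hi g -> mlpoly lo hi (fun x => f x + g x).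
Proof.
move=> [p hp ep] [q hq eq]; exists (fun U => p U + q U) => [U|x].
  by case: (eqVneq (p U) 0) => [->|/hp //]; rewrite add0r => /hq.
by rewrite ep eq -big_split; apply: eq_bigr => U _; rewrite mulrDl.
Qed.

Lemma mlpolyZ lo hi c f : mlpoly lo hi f -> mlpoly lo hi (fun x => c * f x).
Proof.
move=> [p hp ep]; exists (fun U => c * p U) => [U|x].
  by rewrite mulf_eq0 negb_or => /andP[_ /hp].
by rewrite ep mulr_sumr; apply: eq_bigr => U _; rewrite mulrA.
Qed.

Lemma mlpoly_sum lo hi (I : finType) (P : pred I) (F : I -> {set 'I_m} -> R) :
  (forall i, P i -> mlpoly lo hi (F i)) -> mlpoly lo hi (fun x => \sum_(i | P i) F i x).
Proof.
move=> hF; elim: (index_enum I) => [|i s IHs].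
  by apply: (eq_mlpoly (mlpoly0 lo hi)) => x; rewrite big_nil.
case Pi: (P i); last by apply: (eq_mlpoly IHs) => x; rewrite big_cons Pi.
by apply: (eq_mlpoly (mlpolyD (hF i Pi) IHs)) => x; rewrite big_cons Pi.
Qed.

Lemma mlpolyW lo hi lo' hi' f :
  (lo' <= lo)%N -> (hi <= hi')%N -> mlpoly lo hi f -> mlpoly lo' hi' f.
Proof.
move=> le_lo le_hi [p hp ep]; exists p => // U /hp /andP[loU Uhi].
by rewrite (leq_trans le_lo loU) (leq_trans Uhi le_hi).
Qed.

Lemma monomialM U V x : monomial U x * monomial V x = monomial (U :|: V) x.
Proof. by rewrite /monomial subUset -natrM mulnb. Qed.

Lemma mlpolyM d1 d2 f g :
  mlpoly 0 d1 f -> mlpoly 0 d2 g -> mlpoly 0 (d1 + d2) (fun x => f x * g x).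
Proof.
move=> [p hp ep] [q hq eq].
suff hpq : mlpoly 0 (d1 + d2) (fun x => \sum_U \sum_V (p U * q V) * monomial (U :|: V) x).
  apply: (eq_mlpoly hpq) => x; rewrite ep eq mulr_suml; apply: eq_bigr => U _.
  by rewrite mulr_sumr; apply: eq_bigr => V _; rewrite -monomialM mulrACA.
apply: mlpoly_sum => U _; apply: mlpoly_sum => V _.
have [pU0|/hp /andP[_ Ud1]] := eqVneq (p U) 0.
  by apply: (eq_mlpoly (mlpoly0 _ _)) => x; rewrite pU0 !mul0r.
have [qV0|/hq /andP[_ Vd2]] := eqVneq (q V) 0.
  by apply: (eq_mlpoly (mlpoly0 _ _)) => x; rewrite qV0 mulr0 mul0r.
apply/mlpolyZ/mlpoly_monomial.
by rewrite (leq_trans (leq_card_setU U V)) // leq_add.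
Qed.

Lemma pexp_knapsack d f : mlpoly 0 d f -> (d < m)%N ->
  pexp (fun x => (#|x|%:R - half) * f x) = 0.
Proof.
move=> [p hp ep] dm.
rewrite (eq_pexp (g := fun x => \sum_U p U * ((#|x|%:R - half) * monomial U x))); last first.
  by move=> x; rewrite ep mulr_sumr; apply: eq_bigr => U _; rewrite mulrCA.
rewrite pexp_sum big1 // => U _; rewrite pexpZ.
have [->|/hp /andP[_ Ud]] := eqVneq (p U) 0; first by rewrite mul0r.
by rewrite pexp_knapsack_monomial ?mulr0 // (leq_ltn_trans Ud).
Qed.

End MultilinearPolynomials.

Section Gram.
Variable R : realFieldType.
Variable m : nat.
Local Notation pmass := (@pmass R m).
Local Notation pexp := (@pexp R m).
Local Notation monomial := (@monomial R m).
Implicit Types (T U : {set 'I_m}).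

Lemma pmass_setU d T (T' : {set 'I_m}) : #|T| = d -> #|T'| = d -> (2 * d <= m)%N ->
  pmass #|T :|: T'| 0 = \sum_(j < d.+1) 'C(#|T :&: T'|, j)%:R * pmass (2 * d - j) j.
Proof.
move=> Td T'd dm; set i := #|T :&: T'|.
have le_id : (i <= d)%N by rewrite -Td subset_leq_card ?subsetIl.
have -> : #|T :|: T'| = (2 * d - i)%N by have := cardsUI T T'; rewrite Td T'd; lia.
rewrite -(@pmass_binomial R m i (2 * d - i) 0); last by lia.
rewrite (eq_bigr (fun j : 'I_i.+1 => 'C(i, j)%:R * pmass (2 * d - j) j)); last first.
  by move=> j _; rewrite add0n; congr (_ * pmass _ _); have := ltn_ord j; lia.
rewrite (big_ord_widen d.+1 (fun j => 'C(i, j)%:R * pmass (2 * d - j) j)) // big_mkcond /=.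
by apply: eq_bigr => j _; case: ltnP => // ij; rewrite bin_small ?mul0r.
Qed.

Lemma pexp_sq_poly (p : {set 'I_m} -> R) :
  pexp (fun x => (\sum_(U : {set 'I_m}) p U * monomial U x) ^+ 2) =
  \sum_(T : {set 'I_m}) \sum_(T' : {set 'I_m}) p T * p T' * pmass #|T :|: T'| 0.
Proof.
rewrite pexp_sq_sum; apply: eq_bigr => T _; apply: eq_bigr => T' _.
by rewrite (eq_pexp (@monomialM R m T T')) pexp_monomial mulrAC.
Qed.

Lemma pexp_sq_homog d (p : {set 'I_m} -> R) :
  (forall T, p T != 0 -> #|T| = d) -> (2 * d <= m)%N ->
  pexp (fun x => (\sum_(U : {set 'I_m}) p U * monomial U x) ^+ 2) =
  \sum_(j < d.+1) pmass (2 * d - j) j *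
    \sum_(U : {set 'I_m} | #|U| == j) (\sum_(T : {set 'I_m}) p T * (U \subset T)%:R) ^+ 2.
Proof.
move=> pd dm; rewrite pexp_sq_poly.
have split_pair T (T' : {set 'I_m}) : p T * p T' * pmass #|T :|: T'| 0 =
    \sum_(j < d.+1) \sum_(U : {set 'I_m} | #|U| == j)
      pmass (2 * d - j) j * ((p T * (U \subset T)%:R) * (p T' * (U \subset T')%:R)).
  have [->|/pd Td] := eqVneq (p T) 0.
    by rewrite !mul0r big1 // => j _; rewrite big1 // => U _; rewrite !mul0r mulr0.
  have [->|/pd T'd] := eqVneq (p T') 0.
    by rewrite mulr0 mul0r big1 // => j _; rewrite big1 // => U _; rewrite !mul0r !mulr0.
  rewrite (pmass_setU Td T'd dm) mulr_sumr; apply: eq_bigr => j _.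
  rewrite -sum_draws mulr_suml mulr_sumr [in RHS]big_mkcond; apply: eq_bigr => U _.
  rewrite subsetI; case: (#|U| == j); case: (U \subset T); case: (U \subset T');
  by rewrite /= ?(mulr0, mul0r, mulr1, mul1r) // mulrC.
under eq_bigr do under eq_bigr do rewrite split_pair.
under eq_bigr do rewrite exchange_big /=.
rewrite exchange_big /=; apply: eq_bigr => j _.
under eq_bigr do rewrite exchange_big /=.
rewrite exchange_big /= mulr_sumr; apply: eq_bigr => U _.
rewrite expr2 mulr_suml mulr_sumr; apply: eq_bigr => T _.
by rewrite !mulr_sumr.
Qed.

Lemma pexp_sq_homog_ge0 d g :
  (4 * d <= m.+1)%N -> mlpoly d d g -> 0 <= pexp (fun x => g x ^+ 2).
Proof.
move=> dm [p hp ep]; have pd T : p T != 0 -> #|T| = d by move/hp; rewrite -eqn_leq => /eqP.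
rewrite (eq_pexp (g := fun x => (\sum_(U : {set 'I_m}) p U * monomial U x) ^+ 2)); last first.
  by move=> x; rewrite ep.
rewrite (pexp_sq_homog pd); last by lia.
apply: sumr_ge0 => j _; apply: mulr_ge0; last by apply: sumr_ge0 => U _; exact: sqr_ge0.
by apply: pmass_ge0; have := ltn_ord j; lia.
Qed.

End Gram.

Section Homogenization.
Variable R : realFieldType.
Variable m : nat.
Hypothesis m_odd : odd m.
Implicit Types (s d : nat) (x U : {set 'I_m}) (f g h : {set 'I_m} -> R).
Local Notation pexp := (@pexp R m).
Local Notation monomial := (@monomial R m).
Local Notation mlpoly := (@mlpoly R m).
Local Notation half := (half R m).

Lemma half_neq_nat s : half != s%:R.
Proof.
apply/eqP => /(congr1 (fun r => 2 * r)); rewrite /half mulrC divfK ?pnatr_eq0 //.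
by rewrite -natrM => /eqP; rewrite eqr_nat => /eqP m2s; move: m_odd; rewrite m2s oddM.
Qed.

Lemma mlpoly_split_low s d f : mlpoly s d f ->
  exists2 g, mlpoly s s g & mlpoly s.+1 d (fun x => f x - g x).
Proof.
move=> [p hp ep].
exists (fun x => \sum_(U : {set 'I_m}) (if #|U| == s then p U else 0) * monomial U x).
  exists (fun U => if #|U| == s then p U else 0) => // U /=.
  by case: (eqVneq #|U| s) => [->|]; rewrite ?eqxx ?leqnn.
exists (fun U => if #|U| == s then 0 else p U) => [U /=|x].
  case: (eqVneq #|U| s) => [_|Us /hp /andP[sU ->]]; first by rewrite eqxx.
  by rewrite andbT ltn_neqAle eq_sym Us.
rewrite ep -sumrB; apply: eq_bigr => U _.
by case: (#|U| == s); rewrite ?mul0r ?subr0 ?subrr.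
Qed.

Lemma mlpoly_lift s g :
  mlpoly s s g -> mlpoly s.+1 s.+1 (fun x => (#|x|%:R - s%:R) * g x).
Proof.
move=> [p hp ep].
suff hp' : mlpoly s.+1 s.+1
    (fun x => \sum_(U : {set 'I_m}) p U * \sum_(i | i \notin U) monomial (i |: U) x).
  apply: (eq_mlpoly hp') => x; rewrite ep mulr_sumr; apply: eq_bigr => U _.
  have [->|/hp Us] := eqVneq (p U) 0; first by rewrite !mul0r mulr0.
  by rewrite sum_monomial_notin -eqn_leq in Us *; rewrite (eqP Us) mulrCA.
apply: mlpoly_sum => U _.
have [->|/hp Us] := eqVneq (p U) 0.
  by apply: (eq_mlpoly (mlpoly0 R m s.+1 s.+1)) => x; rewrite mul0r.
apply/mlpolyZ/mlpoly_sum => i iU; apply: mlpoly_monomial.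
by move: Us; rewrite cardsU1 iU /=; lia.
Qed.

Lemma pexp_sq_congr d f g h : (2 * d < m)%N ->
  mlpoly 0 d f -> mlpoly 0 d g -> mlpoly 0 d h ->
  (forall x, f x - g x = (#|x|%:R - half) * h x) ->
  pexp (fun x => f x ^+ 2) = pexp (fun x => g x ^+ 2).
Proof.
move=> dm hf hg hh fgh.
have hprod : mlpoly 0 (d + d) (fun x => h x * (f x + g x)).
  by apply: mlpolyM => //; apply: mlpolyD.
rewrite (eq_pexp (g := fun x => g x ^+ 2 + (#|x|%:R - half) * (h x * (f x + g x)))) => [|x].
  by rewrite pexpD (pexp_knapsack hprod) ?addr0 //; lia.
by rewrite mulrA -fgh; ring.
Qed.

Lemma pexp_sq_raise s d f : (s < d)%N -> (2 * d < m)%N -> mlpoly s d f ->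
  exists2 g, mlpoly s.+1 d g & pexp (fun x => f x ^+ 2) = pexp (fun x => g x ^+ 2).
Proof.
move=> sd dm hf; have [f0 hf0 hf1] := mlpoly_split_low hf.
(* Modulo the knapsack constraint, the degree-s part f0 of f equals
   (#|x| - s) * f0 / (half - s), which has degree s + 1. *)
pose c := (half - s%:R)^-1.
have hlift : mlpoly s.+1 d (fun x => c * ((#|x|%:R - s%:R) * f0 x)).
  by apply/mlpolyZ/(mlpolyW _ sd (mlpoly_lift hf0)).
exists (fun x => f x - f0 x + c * ((#|x|%:R - s%:R) * f0 x)); first exact: mlpolyD.
apply: (pexp_sq_congr (h := fun x => - c * f0 x)) dm _ _ _ _.
- exact: mlpolyW hf.
- by apply: mlpolyW (mlpolyD hf1 hlift).
- by apply/mlpolyZ/(mlpolyW _ (ltnW sd) hf0).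
move=> x; rewrite /c; field; by rewrite subr_eq0 half_neq_nat.
Qed.

Lemma pexp_sq_homogenize d f : (2 * d < m)%N -> mlpoly 0 d f ->
  exists2 g, mlpoly d d g & pexp (fun x => f x ^+ 2) = pexp (fun x => g x ^+ 2).
Proof.
move=> dm hf.
suff raise s : (s <= d)%N ->
    exists2 g, mlpoly s d g & pexp (fun x => f x ^+ 2) = pexp (fun x => g x ^+ 2).
  exact: raise.
elim: s => [_|s IHs sd]; first by exists f.
have [g hg ->] := IHs (ltnW sd).
exact: pexp_sq_raise.
Qed.

Theorem pexp_sq_ge0 d f :
  (4 * d <= m.+1)%N -> mlpoly 0 d f -> 0 <= pexp (fun x => f x ^+ 2).
Proof.
move=> dm hf; have m_gt0 : (0 < m)%N by case: m m_odd {hf dm}.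
have [g hg ->] := pexp_sq_homogenize (ltac:(lia) : (2 * d < m)%N) hf.
exact: pexp_sq_homog_ge0 dm hg.
Qed.

End Homogenization.

Section SoSFromPseudoExpectation.
Variable R : realType.
Variable m : nat.
Hypothesis m_odd : odd m.
Variable T : finType.
Variable lit : LPvar T -> {set 'I_m} -> bool.
Hypothesis lit_deg1 : forall v, mlpoly 0 1 (fun x => (lit v x)%:R : R).
Implicit Types (K I J : {set LPvar T}) (x : {set 'I_m}) (g : linform R T).
Local Notation pexp := (@pexp R m).
Local Notation mlpoly := (@mlpoly R m).
Local Notation half := (half R m).

(* A point x of the cube gives the 0/1 assignment [lit v x] of the LP
   variables; [moment] is the resulting pseudo-moment vector y. *)
Definition lits_hold K x := [forall v in K, lit v x].

Definition moment K : R := pexp (fun x => (lits_hold K x)%:R).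

Lemma lits_holdU I J x : lits_hold (I :|: J) x = lits_hold I x && lits_hold J x.
Proof.
apply/forall_inP/andP => [IJx|[/forall_inP Ix /forall_inP Jx] v].
  by split; apply/forall_inP => v vK; apply: IJx; rewrite inE vK ?orbT.
by rewrite inE => /orP[/Ix|/Jx].
Qed.

Lemma lits_hold1 v x : lits_hold [set v] x = lit v x.
Proof. by apply/forall_inP/idP => [-> //|vx w]; rewrite ?set11 // inE => /eqP ->. Qed.

Lemma lits_hold0 x : lits_hold set0 x.
Proof. by apply/forall_inP => v; rewrite inE. Qed.

Lemma mlpoly_lits K : mlpoly 0 #|K| (fun x => (lits_hold K x)%:R).
Proof.
move cardK : #|K| => k; elim: k K cardK => [|k IHk] K cardK.
  have -> : K = set0 by apply/eqP; rewrite -cards_eq0 cardK.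
  by apply: (eq_mlpoly (mlpoly1 R m 0)) => x; rewrite lits_hold0.
have [v vK] : exists v, v \in K by apply/card_gt0P; rewrite cardK.
have cardKv : #|K :\ v| = k by move: cardK; rewrite (cardsD1 v) vK add1n => -[].
apply: (eq_mlpoly (mlpolyM (lit_deg1 v) (IHk _ cardKv))) => x.
by rewrite -natrM mulnb -(lits_hold1 v) -lits_holdU setD1K.
Qed.

Lemma moment0 : moment set0 = 1.
Proof. by rewrite /moment -[RHS](pexp1 R m); apply: eq_pexp => x; rewrite lits_hold0. Qed.

Lemma momentU I J :
  moment (I :|: J) = pexp (fun x => (lits_hold I x)%:R * (lits_hold J x)%:R).
Proof. by apply: eq_pexp => x; rewrite lits_holdU -mulnb natrM. Qed.

Lemma moment_psd t : (4 * t <= m.+1)%N ->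
  psd_on (fun I => (#|I| <= t)%N) (fun I J => moment (I :|: J)).
Proof.
move=> tm w; under eq_bigr do under eq_bigr do rewrite momentU.
rewrite -(pexp_sq_sum (fun I => (#|I| <= t)%N) w (fun I x => (lits_hold I x)%:R)).
apply: (pexp_sq_ge0 m_odd tm); apply: mlpoly_sum => I It.
exact/mlpolyZ/(mlpolyW _ It (mlpoly_lits I)).
Qed.

Lemma moment_ge0_le1 K : (4 * #|K| <= m.+1)%N -> 0 <= moment K <= 1.
Proof.
move=> Km; have hK := mlpoly_lits K.
apply/andP; split.
  rewrite /moment (eq_pexp (g := fun x => (lits_hold K x)%:R ^+ 2)) => [|x].
    exact: (pexp_sq_ge0 m_odd Km hK).
  by case: (lits_hold K x); rewrite ?expr1n ?expr0n.
rewrite -subr_ge0 /moment -[X in X - _](pexp1 R m).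
have h1K : mlpoly 0 #|K| (fun x => 1 - (lits_hold K x)%:R).
  by apply: (eq_mlpoly (mlpolyD (mlpoly1 R m _) (mlpolyZ (-1) hK))) => x; rewrite mulN1r.
rewrite (_ : _ - _ = pexp (fun x => (1 - (lits_hold K x)%:R) ^+ 2)).
  exact: (pexp_sq_ge0 m_odd Km h1K).
rewrite [RHS](eq_pexp (g := fun x => 1 + (-1) * (lits_hold K x)%:R)) => [|x].
  by rewrite pexpD pexpZ mulN1r.
by case: (lits_hold K x); rewrite /=; ring.
Qed.

Definition form_at g x : R := g.1 + \sum_v g.2 v * (lit v x)%:R.

Lemma form_atE g x : form_at g x =
  g.1 + (\sum_i g.2 (inl i) * (lit (inl i) x)%:R + \sum_j g.2 (inr j) * (lit (inr j) x)%:R).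
Proof. by rewrite /form_at big_sumType. Qed.

Lemma lin_shift_moment g K :
  lin_shift g moment K = pexp (fun x => form_at g x * (lits_hold K x)%:R).
Proof.
rewrite (eq_pexp (g := fun x =>
  g.1 * (lits_hold K x)%:R + \sum_v g.2 v * (lits_hold (v |: K) x)%:R)) => [|x].
  by rewrite pexpD pexpZ pexp_sum; congr (_ + _); apply: eq_bigr => v _; rewrite pexpZ.
rewrite mulrDl mulr_suml; congr (_ + _); apply: eq_bigr => v _.
by rewrite lits_holdU lits_hold1 -mulnb natrM mulrA.
Qed.

Lemma lin_shift_moment_eq0 g K (kap : R) : (#|K| < m)%N ->
  (forall x, form_at g x = kap * (#|x|%:R - half)) -> lin_shift g moment K = 0.
Proof.
move=> Km gkap; rewrite lin_shift_moment.
rewrite (eq_pexp (g := fun x => kap * ((#|x|%:R - half) * (lits_hold K x)%:R))) => [|x].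
  by rewrite pexpZ (pexp_knapsack (mlpoly_lits K)) ?mulr0.
by rewrite gkap mulrA.
Qed.

Theorem moment_in_SoS t gs : (8 * t <= m.+1)%N ->
  (forall g, List.In g gs -> exists kap, forall x, form_at g x = kap * (#|x|%:R - half)) ->
  in_SoS t gs moment.
Proof.
move=> tm gs_knapsack; have m_gt0 : (0 < m)%N by case: m m_odd {tm gs_knapsack}.
split.
- exact: moment0.
- by move=> K Kt; apply: moment_ge0_le1; lia.
- by apply: moment_psd; lia.
move=> g /gs_knapsack[kap gkap] w; rewrite big1 // => I It; rewrite big1 // => J Jt.
rewrite (lin_shift_moment_eq0 _ gkap) ?mulr0 ?mul0r //.
by apply: (leq_ltn_trans (leq_card_setU I J)); lia.
Qed.

End SoSFromPseudoExpectation.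

Section ClusterMetric.
Variables (R : realType) (T C : finType) (cl : T -> C) (D : R).
Implicit Types p q : T.

Definition cluster_dist p q : R := if p == q then 0 else if cl p == cl q then 1 else D.

Lemma cluster_dist_ge0 p q : 1 <= D -> 0 <= cluster_dist p q.
Proof.
move=> D_ge1; rewrite /cluster_dist; case: eqP => // _; case: eqP => // _.
exact: le_trans D_ge1.
Qed.

Lemma cluster_dist_ge1 p q : 1 <= D -> p != q -> 1 <= cluster_dist p q.
Proof. by move=> D_ge1; rewrite /cluster_dist => /negPf ->; case: eqP. Qed.

Lemma cluster_dist_far p q : cl p != cl q -> cluster_dist p q = D.
Proof.
rewrite /cluster_dist => /negPf clpq; rewrite clpq.
by case: eqP => // pq; rewrite pq eqxx in clpq.
Qed.

Lemma cluster_dist_metric : 1 <= D -> is_metric cluster_dist.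
Proof.
move=> D_ge1; split => [p q|p q|p q|p q r]; first exact: cluster_dist_ge0.
- split=> [|->]; last by rewrite /cluster_dist eqxx.
  rewrite /cluster_dist; case: eqP => // _; case: eqP => _ /eqP; first by rewrite oner_eq0.
  by rewrite gt_eqF // (lt_le_trans ltr01 D_ge1).
- by rewrite /cluster_dist eq_sym [cl q == _]eq_sym.
have [->|pr] := eqVneq p r; first by rewrite {1}/cluster_dist eqxx addr_ge0 ?cluster_dist_ge0.
have ge0 := cluster_dist_ge0; have ge1 := cluster_dist_ge1 D_ge1.
have [clpr|clpr] := eqVneq (cl p) (cl r).
  rewrite {1}/cluster_dist (negPf pr) clpr eqxx.
  have [<-|pq] := eqVneq p q; last by have := ge1 _ _ pq; have := ge0 q r D_ge1; lra.
  by have := ge1 _ _ pr; have := ge0 p p D_ge1; lra.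
rewrite cluster_dist_far //.
have [clpq|clpq] := eqVneq (cl p) (cl q).
  by rewrite (@cluster_dist_far q r) -?clpq //; have := ge0 p q D_ge1; lra.
by rewrite (@cluster_dist_far p q) //; have := ge0 q r D_ge1; lra.
Qed.

Lemma cluster_dist_le1 p q : 1 < D -> (cluster_dist p q <= 1) = (cl p == cl q).
Proof.
move=> D_gt1; rewrite /cluster_dist; case: eqP => [->|_]; first by rewrite eqxx ler01.
by case: eqP => _; rewrite ?lexx // leNgt D_gt1.
Qed.

Lemma covered_clusters (Cs : {set T}) rho : rho < D ->
  covered cluster_dist Cs rho \subset [set p | cl p \in cl @: Cs].
Proof.
move=> rhoD; apply/subsetP => p /bigcupP[c cC]; rewrite !inE => cp.
have -> : cl p = cl c.
  by apply/eqP; rewrite eq_sym; apply: contraLR cp => /cluster_dist_far ->; rewrite -ltNge.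
exact: imset_f.
Qed.

End ClusterMetric.

Section Instance.
Variable n : nat.

Definition cluster := ('I_n * bool)%type.
Definition point := (cluster * 'I_4)%type.

Lemma card_point : #|{: point}| = (8 * n)%N.
Proof. by rewrite !card_prod !card_ord card_bool; lia. Qed.

Definition decode (p : 'I_(8 * n)) : point := enum_val (cast_ord (esym card_point) p).
Definition cluster_of (p : 'I_(8 * n)) : cluster := (decode p).1.
Definition slot (p : 'I_(8 * n)) : 'I_4 := (decode p).2.

Definition red_point (q : point) := if q.1.2 then q.2 == ord0 else q.2 != ord_max.
Definition red_points := [set p | red_point (decode p)].

Definition is_open (c : cluster) (x : {set 'I_n}) :=
  if c.2 then c.1 \notin x else c.1 \in x.

Definition lit (v : LPvar 'I_(8 * n)) x :=
  match v with
  | inl p => (slot p == ord0) && is_open (cluster_of p) x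
  | inr p => is_open (cluster_of p) x
  end.

Lemma big_points (V : Type) (idx : V) (op : Monoid.com_law idx) (F : point -> V) :
  \big[op/idx]_(p : 'I_(8 * n)) F (decode p) =
  \big[op/idx]_(c : cluster) \big[op/idx]_(k < 4) F (c, k).
Proof.
rewrite -big_pair (reindex decode) //.
exists (fun q => cast_ord card_point (enum_rank q)) => p _.
  by rewrite /decode enum_valK cast_ordKV.
by rewrite /decode cast_ordK enum_rankK.
Qed.

Lemma card_points_in (S : {set cluster}) (P : point -> bool) :
  #|[set p | (cluster_of p \in S) && P (decode p)]| = (\sum_(c in S) \sum_(k < 4) P (c, k))%N.
Proof.
rewrite -sum1dep_card big_mkcond (big_points _ (fun q => if (q.1 \in S) && P q then 1 else 0))%N.
rewrite [RHS]big_mkcond; apply: eq_bigr => c _ /=; case: (c \in S) => /=; last by rewrite big1.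
by apply: eq_bigr => k _; case: (P (c, k)).
Qed.

Lemma sum_red_slots (c : cluster) : (\sum_(k < 4) red_point (c, k) = if c.2 then 1 else 3)%N.
Proof. by rewrite /red_point /=; case: c.2; rewrite !big_ord_recl big_ord0. Qed.

Lemma sum_blue_slots (c : cluster) : (\sum_(k < 4) ~~ red_point (c, k) = if c.2 then 3 else 1)%N.
Proof. by rewrite /red_point /=; case: c.2; rewrite !big_ord_recl big_ord0. Qed.

End Instance.

Section InstanceLP.
Variables (R : realType) (n : nat).
Implicit Types (x : {set 'I_n}) (c : cluster n).
Local Notation lit := (@lit n).
Local Notation is_open := (@is_open n).
Local Notation cluster_of := (@cluster_of n).
Local Notation red_point := (@red_point n).

Lemma mlpoly_is_open c : mlpoly 0 1 (fun x => (is_open c x)%:R : R).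
Proof.
have hi : mlpoly 0 1 (monomial R [set c.1]) by apply: mlpoly_monomial; rewrite cards1.
rewrite /is_open; case: c.2; last by apply: (eq_mlpoly hi) => x; rewrite /monomial sub1set.
apply: (eq_mlpoly (mlpolyD (mlpoly1 R n 1) (mlpolyZ (-1) hi))) => x.
by rewrite /monomial sub1set; case: (c.1 \in x) => /=; ring.
Qed.

Lemma mlpoly_lit v : mlpoly 0 1 (fun x => (lit v x)%:R : R).
Proof.
case: v => p /=; last exact: mlpoly_is_open.
case: (slot p == ord0); first exact: mlpoly_is_open.
exact: mlpoly0.
Qed.

Lemma sum_is_open (a b : R) x :
  \sum_c (if c.2 then b else a) * (is_open c x)%:R = a * #|x|%:R + b * (n%:R - #|x|%:R).
Proof.
have -> : n%:R - #|x|%:R = \sum_i (1 - ((i \in x)%:R : R)).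
  by rewrite sumrB sumr_const card_ord natr_card.
rewrite natr_card !mulr_sumr -big_split big_pair; apply: eq_bigr => i _.
by rewrite big_bool /is_open /=; case: (i \in x) => /=; ring.
Qed.

Lemma sum_points_open (f : point n -> R) x :
  \sum_(p : 'I_(8 * n)) f (decode p) * (is_open (cluster_of p) x)%:R =
  \sum_c (\sum_(k < 4) f (c, k)) * (is_open c x)%:R.
Proof.
rewrite (big_points _ (fun q => f q * (is_open q.1 x)%:R)).
by apply: eq_bigr => c _; rewrite mulr_suml.
Qed.

Lemma sum_points_open_count (P : pred (point n)) (a b : nat) x :
  (forall c, \sum_(k < 4) P (c, k) = if c.2 then b else a)%N ->
  \sum_(p : 'I_(8 * n)) (P (decode p))%:R * (is_open (cluster_of p) x)%:R =
  a%:R * #|x|%:R + b%:R * (n%:R - #|x|%:R) :> R.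
Proof.
move=> countP; rewrite (sum_points_open (fun q => (P q)%:R)) -sum_is_open.
by apply: eq_bigr => c _; rewrite -natr_sum countP; case: c.2.
Qed.

Lemma sum_lit_centers x : \sum_p (lit (inl p) x)%:R = n%:R :> R.
Proof.
rewrite (eq_bigr (fun p => ((decode p).2 == ord0)%:R * (is_open (cluster_of p) x)%:R)) => [|p _].
  rewrite (@sum_points_open_count (fun q => q.2 == ord0) 1 1) ?mul1r ?subrKC // => c.
  by rewrite if_same (bigD1 ord0) //= big1 // => k /negPf ->.
by rewrite /= -mulnb natrM.
Qed.

Lemma sum_lit_ball (D : R) j x : 1 < D ->
  \sum_i (if cluster_dist cluster_of D j i <= 1 then 1 else 0) * (lit (inl i) x)%:R =
  (is_open (cluster_of j) x)%:R :> R.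
Proof.
move=> D_gt1; pose P (q : point n) := (q.1 == cluster_of j) && (q.2 == ord0).
rewrite (eq_bigr (fun i => (P (decode i))%:R * (is_open (cluster_of i) x)%:R)); last first.
  move=> i _.
  rewrite cluster_dist_le1 // /P /= [cluster_of i == _]eq_sym.
  by case: (_ == _); case: (slot i == ord0); rewrite /= ?mul1r ?mul0r ?mulr0.
rewrite (sum_points_open (fun q => (P q)%:R)) (bigD1 (cluster_of j)) //=.
rewrite [X in _ + X]big1 ?addr0 => [|c /negPf cj]; last first.
  by rewrite big1 ?mul0r // => k _; rewrite /P cj.
by rewrite (bigD1 ord0) //= big1 ?addr0 /P ?eqxx ?mul1r // => k /negPf ->; rewrite andbF.
Qed.

Lemma sum_lit_red x :
  \sum_p (if p \in red_points n then 1 else 0) * (lit (inr p) x)%:R =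
  3 * #|x|%:R + 1 * (n%:R - #|x|%:R) :> R.
Proof.
rewrite -(@sum_points_open_count red_point 3 1 x (@sum_red_slots n)).
by apply: eq_bigr => p _; rewrite inE; case: (red_point _).
Qed.

Lemma sum_lit_blue x :
  \sum_p (if p \in red_points n then 0 else 1) * (lit (inr p) x)%:R =
  1 * #|x|%:R + 3 * (n%:R - #|x|%:R) :> R.
Proof.
rewrite -(@sum_points_open_count (fun q => ~~ red_point q) 1 3 x (@sum_blue_slots n)).
by apply: eq_bigr => p _; rewrite inE; case: (red_point _).
Qed.

Lemma LP1_constraints_knapsack (D : R) : 1 < D -> forall g,
  List.In g (LP1_constraints (cluster_dist cluster_of D) (red_points n) n (2 * n) (2 * n)) ->
  exists kap, forall x, form_at lit g x = kap * (#|x|%:R - half R n).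
Proof.
move=> D_gt1 g /List.in_app_iff[/List.in_map_iff[j [<- _]]|/= ].
  exists 0 => x; rewrite mul0r form_atE /= add0r sum_lit_ball //.
  rewrite (bigD1 j) //= eqxx big1 ?addr0 => [|i /negPf -> ]; last by rewrite mul0r.
  by rewrite mulN1r subrr.
move=> [<-|[<-|[<-|[]]]].
- exists 0 => x; rewrite mul0r form_atE /=.
  rewrite [X in _ + (_ + X)]big1 ?addr0 => [|j _]; last by rewrite mul0r.
  rewrite (eq_bigr (fun p => - (lit (inl p) x)%:R)) => [|p _]; last by rewrite mulN1r.
  by rewrite sumrN sum_lit_centers subrr.
- exists 2 => x; rewrite form_atE /= big1 ?add0r => [|p _]; last by rewrite mul0r.
  by rewrite sum_lit_red /half natrM; field.
- exists (-2) => x; rewrite form_atE /= big1 ?add0r => [|p _]; last by rewrite mul0r.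
  by rewrite sum_lit_blue /half natrM; field.
Qed.

Lemma card_covered_le (D : R) (C : {set 'I_(8 * n)}) rho (P : pred (point n)) : rho < D ->
  (#|covered (cluster_dist cluster_of D) C rho :&: [set p | P (decode p)]| <=
   \sum_(c in cluster_of @: C) \sum_(k < 4) P (c, k))%N.
Proof.
move=> rhoD; rewrite -card_points_in; apply: subset_leq_card; apply/subsetP => p.
by rewrite !inE => /andP[/(subsetP (covered_clusters cluster_of C rhoD)) + ->]; rewrite inE => ->.
Qed.

Lemma solution_radius_ge (D : R) C rho : odd n ->
  is_solution (cluster_dist cluster_of D) (red_points n) n (2 * n) (2 * n) C rho -> D <= rho.
Proof.
move=> n_odd [Cn red_cov blue_cov]; rewrite leNgt; apply/negP => rhoD.
have blueE : ~: red_points n = [set p | ~~ red_point (decode p)] by apply/setP => p; rewrite !inE.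
rewrite blueE in blue_cov.
have := card_covered_le C red_point rhoD; have := card_covered_le C (fun q => ~~ red_point q) rhoD.
rewrite (eq_bigr _ (fun c _ => sum_red_slots c)) (eq_bigr _ (fun c _ => sum_blue_slots c)).
set S := cluster_of @: C; have Sn : (#|S| <= n)%N := leq_trans (leq_imset_card _ _) Cn.
have sum_if (u v : nat) : (\sum_(c in S) (if c.2 then u else v) =
                           u * \sum_(c in S) c.2 + v * \sum_(c in S) ~~ c.2)%N.
  rewrite (eq_bigr (fun c => u * c.2 + v * ~~ c.2)%N) => [|c _].
    by rewrite big_split -!big_distrr.
  by case: c.2 => /=; rewrite ?muln1 ?muln0 ?addn0.
have cardS : (\sum_(c in S) c.2 + \sum_(c in S) ~~ c.2 = #|S|)%N.
  by rewrite -big_split -sum1_card; apply: eq_bigr => c _; case: c.2.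
rewrite (sum_if 1%N 3%N) (sum_if 3%N 1%N) /red_points in red_cov *.
by move: red_cov blue_cov cardS Sn (odd_double_half n); rewrite n_odd; lia.
Qed.

End InstanceLP.

Theorem theorem5 (R : realType) :
  exists c : R, 0 < c /\
  forall (n : nat), odd n -> (0 < n)%N ->
  forall D : R, 1 < D ->
  exists (d : 'I_(8 * n) -> 'I_(8 * n) -> R) (Red : {set 'I_(8 * n)}),
    is_metric d /\
    (forall (C : {set 'I_(8 * n)}) (rho : R),
        is_solution d Red n (2 * n) (2 * n) C rho -> D <= rho) /\
    (forall t : nat, (1 <= t)%N -> t%:R <= c * n%:R ->
        SoS_nonempty t (LP1_constraints d Red n (2 * n) (2 * n))).
Proof.
exists (1 / 8); split; first by rewrite divr_gt0.
move=> n n_odd _ D D_gt1; exists (cluster_dist (@cluster_of n) D), (red_points n).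
split; first exact/cluster_dist_metric/ltW.
split=> [C rho|t _ tn]; first exact: solution_radius_ge.
have t8n : (8 * t <= n)%N by rewrite -(ler_nat R) natrM; lra.
exists (moment R (@lit n)); apply: (moment_in_SoS n_odd (@mlpoly_lit R n)); first lia.
exact: LP1_constraints_knapsack.
Qed.
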